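(* Let $\mathbb{X}$ be an idempotent semifield as described in the context. Let $n,m\geq1$, let $\bm{p}_{j}=(p_{1j},\ldots,p_{nj})^{T}\in\mathbb{X}^{n}$, $j=1,\ldots,m$, be regular vectors, let $w_{1},\ldots,w_{m}$ be positive reals, let $h_{j},d_{j}\in\mathbb{X}\setminus\{\mathbb{0}\}$, let $c_{1},\ldots,c_{n}$ be nonzero reals, let $\bm{B}=(b_{ik})\in\mathbb{X}^{n\times n}$ (entries may equal $\mathbb{0}$), and let $\bm{f}=(f_{i}),\bm{g}=(g_{i})\in\mathbb{X}^{n}$ be regular with $\bm{f}\leq\bm{g}$. Consider the problem of minimizing over regular $\bm{x}=(x_{i})\in\mathbb{X}^{n}$ $$\bigoplus_{1\leq j\leq m}h_{j}(\bm{p}_{j}^{-}\bm{x}\oplus\bm{x}^{-}\bm{p}_{j})^{w_{j}}$$ subject to $\bm{p}_{j}^{-}\bm{x}\oplus\bm{x}^{-}\bm{p}_{j}\leq d_{j}$ ($j=1,\ldots,m$), $b_{ik}x_{k}^{c_{k}}\leq x_{i}^{c_{i}}$ ($i,k=1,\ldots,n$), and $\bm{f}\leq\bm{x}\leq\bm{g}$. Define vectors $\bm{s}=(s_{i})$, $\bm{t}=(t_{i})$ by $$s_{i}=\bigoplus_{1\leq j\leq m}d_{j}^{-|c_{i}|}p_{ij}^{c_{i}}\oplus(f_{i}^{-c_{i}}\oplus g_{i}^{-c_{i}})^{-1},\qquad t_{i}^{-1}=\bigoplus_{1\leq j\leq m}d_{j}^{-|c_{i}|}p_{ij}^{-c_{i}}\oplus(f_{i}^{c_{i}}\oplus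 g_{i}^{c_{i}})^{-1}.$$ Suppose (1) $\mathrm{Tr}(\bm{B})\leq\mathbb{1}$ and (2) $\bm{t}^{-}\bm{B}^{\ast}\bm{s}\leq\mathbb{1}$. Then the minimum value of the problem is $$\theta=\bigoplus_{1\leq i,k\leq n}\bigoplus_{1\leq j,l\leq m}\bigg(h_{j}^{\frac{|c_{i}|w_{l}}{|c_{i}|w_{l}+|c_{k}|w_{j}}}h_{l}^{\frac{|c_{k}|w_{j}}{|c_{i}|w_{l}+|c_{k}|w_{j}}}(p_{ij}^{-c_{i}}b_{ik}^{\ast}p_{kl}^{c_{k}})^{\frac{w_{j}w_{l}}{|c_{i}|w_{l}+|c_{k}|w_{j}}}\oplus h_{j}(p_{ij}^{-c_{i}}b_{ik}^{\ast}s_{k})^{w_{j}/|c_{i}|}\oplus h_{l}(t_{i}^{-1}b_{ik}^{\ast}p_{kl}^{c_{k}})^{w_{l}/|c_{k}|}\bigg),$$ where $b_{ik}^{\ast}$ are the entries of $\bm{B}^{\ast}$. Moreover, with vectors $\bm{q}=(q_{i})$, $\bm{r}=(r_{i})$ given by $$q_{i}=\bigoplus_{1\leq j\leq m}\theta^{-|c_{i}|/w_{j}}h_{j}^{|c_{i}|/w_{j}}p_{ij}^{c_{i}},\qquad r_{i}^{-1}=\bigoplus_{1\leq j\leq m}\theta^{-|c_{i}|/w_{j}}h_{j}^{|c_{i}|/w_{j}}p_{ij}^{-c_{i}},$$ all solution vectors $\bm{x}=(x_{i})$ have entries $x_{i}=y_{i}^{1/c_{i}}$, $i=1,\ldots,n$,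 where $\bm{y}=(y_{i})=\bm{B}^{\ast}\bm{v}$ and the parameter vector $\bm{v}$ satisfies $\bm{q}\oplus\bm{s}\leq\bm{v}\leq((\bm{r}^{-}\oplus\bm{t}^{-})\bm{B}^{\ast})^{-}$.
   Context: An idempotent semifield $(\mathbb{X},\oplus,\otimes,\mathbb{0},\mathbb{1})$ is a set with distinct elements $\mathbb{0},\mathbb{1}$ such that $(\mathbb{X},\oplus,\mathbb{0})$ is a commutative idempotent monoid, $(\mathbb{X}\setminus\{\mathbb{0}\},\otimes,\mathbb{1})$ is an abelian group, and $\otimes$ distributes over $\oplus$. The relation $x\leq y\iff x\oplus y=y$ is assumed to be a total order. The sign $\otimes$ is omitted; $x^{-1}$ is the inverse of $x\neq\mathbb{0}$. Powers $x^{p}$ with real exponents are assumed well defined (with $\mathbb{0}^{p}=\mathbb{0}$ for $p>0$) and obey the usual power rules. Main example: max-plus $(\mathbb{R}\cup\{-\infty\},\max,+,-\infty,0)$ with $x^{p}=px$. Vector/matrix operations use $\oplus,\otimes$; inequalities are componentwise; a vector is regular if it has no $\mathbb{0}$ entries. For nonzero $\bm{x}=(x_{i})$, $\bm{x}^{-}$ is the transposed vector with entries $x_{i}^{-1}$ if $x_{i}\neq\mathbb{0}$ and $\mathbb{0}$ otherwise. $\bm{I}$ is the identity matrix, $\bm{B}^{0}=\bm{I}$, $\bm{B}^{p}=\bm{B}\bm{B}^{p-1}$; $\mathrm{tr}\,\bm{B}=b_{11}\oplus\cdots\oplus b_{nn}$, $\mathrm{Tr}(\bm{B})=\mathrm{tr}\,\bm{B}\oplus\cdots\oplus\mathrm{tr}\,\bm{B}^{n}$,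 and $\bm{B}^{\ast}=\bm{I}\oplus\bm{B}\oplus\cdots\oplus\bm{B}^{n-1}$. *)

From mathcomp Require Import all_boot.
From Stdlib Require Import Reals.

Set Implicit Arguments.
Unset Strict Implicit.
Unset Printing Implicit Defensive.

(* The inverse of zero is fixed to zero (a convention;
   it only matters for the "conjugate" x^- of vectors, where the paper puts
   zero entries for zero components). *)
Record idem_semifield := IdemSemifield {
  sf_car :> Type;
  sf_zero : sf_car;
  sf_one : sf_car;
  sf_add : sf_car -> sf_car -> sf_car;
  sf_mul : sf_car -> sf_car -> sf_car;
  sf_inv : sf_car -> sf_car;
  sf_pow : sf_car -> R -> sf_car;
  sf_zero_neq_one : sf_zero <> sf_one;
  sf_addA : forall x y z, sf_add x (sf_add y z) = sf_add (sf_add x y) z;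
  sf_addC : forall x y, sf_add x y = sf_add y x;
  sf_add0x : forall x, sf_add sf_zero x = x;
  sf_addxx : forall x, sf_add x x = x;
  sf_mulA : forall x y z, sf_mul x (sf_mul y z) = sf_mul (sf_mul x y) z;
  sf_mulC : forall x y, sf_mul x y = sf_mul y x;
  sf_mul1x : forall x, sf_mul sf_one x = x;
  sf_mul0x : forall x, sf_mul sf_zero x = sf_zero;
  sf_mulV : forall x, x <> sf_zero -> sf_mul x (sf_inv x) = sf_one;
  sf_inv0 : sf_inv sf_zero = sf_zero;
  sf_mulDr : forall x y z, sf_mul x (sf_add y z) = sf_add (sf_mul x y) (sf_mul x z);
  sf_le_total : forall x y, sf_add x y = y \/ sf_add x y = x;
  sf_pow1 : forall x, x <> sf_zero -> sf_pow x 1%R = x;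
  sf_powD : forall x p q, x <> sf_zero ->
      sf_pow x (p + q)%R = sf_mul (sf_pow x p) (sf_pow x q);
  sf_powM : forall x p q, x <> sf_zero ->
      sf_pow (sf_pow x p) q = sf_pow x (p * q)%R;
  sf_powMl : forall x y p, x <> sf_zero -> y <> sf_zero ->
      sf_pow (sf_mul x y) p = sf_mul (sf_pow x p) (sf_pow y p);
  sf_pow0 : forall p, (0 < p)%R -> sf_pow sf_zero p = sf_zero;
  sf_pow_mono : forall x y p, x <> sf_zero -> sf_add x y = y -> (0 < p)%R ->
      sf_add (sf_pow x p) (sf_pow y p) = sf_pow y p
}.

Section Defs.
Variable S : idem_semifield.

Definition sle (x y : S) : Prop := sf_add x y = y.

Definition bsum (k : nat) (F : 'I_k -> S) : S :=
  \big[@sf_add S / @sf_zero S]_(i < k) F i.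

Definition regular (n : nat) (x : 'I_n -> S) : Prop :=
  forall i, x i <> sf_zero S.

Definition mxmul n (A B : 'I_n -> 'I_n -> S) : 'I_n -> 'I_n -> S :=
  fun i k => bsum (fun j => sf_mul (A i j) (B j k)).
Definition mxid n : 'I_n -> 'I_n -> S :=
  fun i k => if i == k then sf_one S else sf_zero S.
Definition mxpow n (B : 'I_n -> 'I_n -> S) (p : nat) : 'I_n -> 'I_n -> S :=
  iter p (mxmul B) (@mxid n).
Definition kstar n (B : 'I_n -> 'I_n -> S) : 'I_n -> 'I_n -> S :=
  fun i k => bsum (fun p : 'I_n => mxpow B p i k).
Definition mxtr n (B : 'I_n -> 'I_n -> S) : S := bsum (fun i => B i i).
Definition Tr n (B : 'I_n -> 'I_n -> S) : S :=
  bsum (fun k : 'I_n => mxtr (mxpow B k.+1)).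

Variables (n m : nat).
Variables (p : 'I_n -> 'I_m -> S) (w : 'I_m -> R) (h d : 'I_m -> S)
  (c : 'I_n -> R) (B : 'I_n -> 'I_n -> S) (f g : 'I_n -> S).

Definition dist (x : 'I_n -> S) (j : 'I_m) : S :=
  sf_add (bsum (fun i => sf_mul (sf_inv (p i j)) (x i)))
         (bsum (fun i => sf_mul (sf_inv (x i)) (p i j))).

Definition objective (x : 'I_n -> S) : S :=
  bsum (fun j => sf_mul (h j) (sf_pow (dist x j) (w j))).

Definition feasible (x : 'I_n -> S) : Prop :=
  regular x /\
  (forall j, sle (dist x j) (d j)) /\
  (forall i k, sle (sf_mul (B i k) (sf_pow (x k) (c k))) (sf_pow (x i) (c i))) /\
  (forall i, sle (f i) (x i) /\ sle (x i) (g i)).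

Definition svec (i : 'I_n) : S :=
  sf_add (bsum (fun j => sf_mul (sf_pow (d j) (- Rabs (c i))%R) (sf_pow (p i j) (c i))))
         (sf_inv (sf_add (sf_pow (f i) (- c i)%R) (sf_pow (g i) (- c i)%R))).

Definition tinv (i : 'I_n) : S :=
  sf_add (bsum (fun j => sf_mul (sf_pow (d j) (- Rabs (c i))%R) (sf_pow (p i j) (- c i)%R)))
         (sf_inv (sf_add (sf_pow (f i) (c i)) (sf_pow (g i) (c i)))).

Definition theta : S :=
  bsum (fun i => bsum (fun k => bsum (fun j => bsum (fun l =>
    let D := (Rabs (c i) * w l + Rabs (c k) * w j)%R in
    let bs := kstar B i k in
    sf_add
      (sf_mul (sf_mul (sf_pow (h j) (Rabs (c i) * w l / D)%R)
                      (sf_pow (h l) (Rabs (c k) * w j / D)%R))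
              (sf_pow (sf_mul (sf_mul (sf_pow (p i j) (- c i)%R) bs) (sf_pow (p k l) (c k)))
                      (w j * w l / D)%R))
      (sf_add
        (sf_mul (h j) (sf_pow (sf_mul (sf_mul (sf_pow (p i j) (- c i)%R) bs) (svec k))
                              (w j / Rabs (c i))%R))
        (sf_mul (h l) (sf_pow (sf_mul (sf_mul (tinv i) bs) (sf_pow (p k l) (c k)))
                              (w l / Rabs (c k))%R))))))).

Definition qvec (i : 'I_n) : S :=
  bsum (fun j => sf_mul (sf_mul (sf_pow theta (- Rabs (c i) / w j)%R)
                                (sf_pow (h j) (Rabs (c i) / w j)%R))
                        (sf_pow (p i j) (c i))).

Definition rinv (i : 'I_n) : S :=
  bsum (fun j => sf_mul (sf_mul (sf_pow theta (- Rabs (c i) / w j)%R)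
                                (sf_pow (h j) (Rabs (c i) / w j)%R))
                        (sf_pow (p i j) (- c i)%R)).

Definition uvec (k : 'I_n) : S :=
  sf_inv (bsum (fun i => sf_mul (sf_add (rinv i) (tinv i)) (kstar B i k))).

End Defs.

(* Substituting y_i = x_i^{c_i} turns the constraints, together with the bound
   "objective <= tau", into the linear system
     B y <= y,   q_tau (+) s <= y,   (r_tau^- (+) t^-) y <= 1,
   where q_tau, r_tau are q, r with theta replaced by tau.  Since Tr(B) <= 1, every
   walk of length >= n in the weighted digraph of B contains a closed walk of weight
   <= 1, so every power of B is dominated by B^*; hence the solutions of B y <= y are
   exactly the vectors B^* v, and the system is solvable iff
     (r_tau^- (+) t^-) B^* (q_tau (+) s) <= 1.
   Expanding this product and solving each of its terms for tau (the term
   t^- B^* s is hypothesis (2)) shows that it holds exactly when theta <= tau. *)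

From Pilot Require Import Defs.
From mathcomp Require Import all_boot.
From Stdlib Require Import Reals Lra Classical.
From HB Require Import structures.

Set Implicit Arguments.
Unset Strict Implicit.
Unset Printing Implicit Defensive.

Lemma last_take (T : Type) (x : T) (s : seq T) r :
  (r <= size s)%N -> last x (take r s) = nth x (x :: s) r.
Proof.
move=> r_le; rewrite (last_nth x) size_takel //.
by rewrite -[x :: take r s]/(take r.+1 (x :: s)) nth_take.
Qed.

Section IdempotentSemifield.
Variable S : idem_semifield.

HB.instance Definition _ := Monoid.isComLaw.Build (sf_car S) (sf_zero S)
  (@sf_add S) (@sf_addA S) (@sf_addC S) (@sf_add0x S).

Lemma sf_semi_ring : semi_ring_theory (sf_zero S) (sf_one S) (@sf_add S) (@sf_mul S) (@eq S).
Proof.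
constructor; [exact: sf_add0x | exact: sf_addC | exact: sf_addA | exact: sf_mul1x
  | exact: sf_mul0x | exact: sf_mulC | exact: sf_mulA | ].
by move=> x y z; rewrite sf_mulC sf_mulDr !(sf_mulC z).
Qed.
Add Ring sf_ring : sf_semi_ring.

Local Notation "0s" := (sf_zero S).
Local Notation "1s" := (sf_one S).
Local Notation "x ⊕ y" := (sf_add x y) (at level 50, left associativity).
Local Notation "x ⊗ y" := (sf_mul x y) (at level 40, left associativity).
Local Notation "x ≼ y" := (sle x y) (at level 70).
Local Notation "x ^^ q" := (sf_pow x q) (at level 29).
Local Notation inv := (@sf_inv S).

Implicit Types x y z a : S.

Lemma sf_mulx1 x : x ⊗ 1s = x. Proof. by rewrite sf_mulC sf_mul1x. Qed.
Lemma sf_mulx0 x : x ⊗ 0s = 0s. Proof. by rewrite sf_mulC sf_mul0x. Qed.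
Lemma sf_mulDl x y z : (x ⊕ y) ⊗ z = x ⊗ z ⊕ y ⊗ z. Proof. ring. Qed.

Lemma sle_refl x : x ≼ x. Proof. exact: sf_addxx. Qed.

Lemma sle_trans x y z : x ≼ y -> y ≼ z -> x ≼ z.
Proof. by rewrite /sle => xy yz; rewrite -yz sf_addA xy. Qed.

Lemma sle_anti x y : x ≼ y -> y ≼ x -> x = y.
Proof. by rewrite /sle => xy yx; rewrite -yx sf_addC xy. Qed.

Lemma sle0x x : 0s ≼ x. Proof. exact: sf_add0x. Qed.

Lemma sle_addl x y : x ≼ x ⊕ y. Proof. by rewrite /sle sf_addA sf_addxx. Qed.
Lemma sle_addr x y : y ≼ x ⊕ y. Proof. by rewrite sf_addC; apply: sle_addl. Qed.

Lemma sle_add x y z : x ≼ z -> y ≼ z -> x ⊕ y ≼ z.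
Proof. by rewrite /sle => xz yz; rewrite -sf_addA yz xz. Qed.

Lemma sle_addE x y z : x ⊕ y ≼ z <-> x ≼ z /\ y ≼ z.
Proof.
split=> [xyz | [xz yz]]; last exact: sle_add.
by split; apply: sle_trans xyz; [apply: sle_addl | apply: sle_addr].
Qed.

Lemma sle_neq0 x y : x <> 0s -> x ≼ y -> y <> 0s.
Proof. by move=> x0 xy y0; apply/x0/sle_anti/sle0x; rewrite -y0. Qed.

Lemma addf_neq0l x y : x <> 0s -> x ⊕ y <> 0s.
Proof. by move=> x0; apply/sle_neq0/sle_addl. Qed.

Lemma addf_neq0r x y : y <> 0s -> x ⊕ y <> 0s.
Proof. by rewrite sf_addC; apply: addf_neq0l. Qed.

Lemma sle_mul2l a x y : x ≼ y -> a ⊗ x ≼ a ⊗ y.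
Proof. by rewrite /sle -sf_mulDr => ->. Qed.

Lemma sle_mul2r a x y : x ≼ y -> x ⊗ a ≼ y ⊗ a.
Proof. rewrite !(sf_mulC _ a); exact: sle_mul2l. Qed.

Lemma one_neq0 : 1s <> 0s. Proof. exact: not_eq_sym (@sf_zero_neq_one S). Qed.

Lemma mulVf x : x <> 0s -> inv x ⊗ x = 1s. Proof. by move=> x0; rewrite sf_mulC sf_mulV. Qed.

Lemma mulf_neq0 x y : x <> 0s -> y <> 0s -> x ⊗ y <> 0s.
Proof.
move=> x0 y0 xy0; apply: x0.
by rewrite -[x]sf_mulx1 -(sf_mulV y0) sf_mulA xy0 sf_mul0x.
Qed.

Lemma inv_neq0 x : x <> 0s -> inv x <> 0s.
Proof. by move=> x0 ix0; apply: one_neq0; rewrite -(sf_mulV x0) ix0 sf_mulx0. Qed.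

Lemma mulKf x y : x <> 0s -> inv x ⊗ (x ⊗ y) = y.
Proof. by move=> x0; rewrite sf_mulA mulVf // sf_mul1x. Qed.

Lemma mul_eq1_inv x y : x ⊗ y = 1s -> x <> 0s -> y = inv x.
Proof. by move=> xy1 x0; rewrite -(mulKf y x0) xy1 sf_mulx1. Qed.

Lemma invK x : x <> 0s -> inv (inv x) = x.
Proof. by move=> x0; symmetry; apply: mul_eq1_inv; [exact: mulVf | exact: inv_neq0]. Qed.

Lemma invM x y : x <> 0s -> y <> 0s -> inv (x ⊗ y) = inv x ⊗ inv y.
Proof.
move=> x0 y0; symmetry; apply: mul_eq1_inv; last exact: mulf_neq0.
have -> : x ⊗ y ⊗ (inv x ⊗ inv y) = (x ⊗ inv x) ⊗ (y ⊗ inv y) by ring.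
by rewrite !sf_mulV // sf_mulx1.
Qed.

Lemma sle_pmul2l a x y : a <> 0s -> (a ⊗ x ≼ a ⊗ y <-> x ≼ y).
Proof.
move=> a0; split=> [|]; last exact: sle_mul2l.
by rewrite -{2}(mulKf x a0) -{2}(mulKf y a0); apply: sle_mul2l.
Qed.

Lemma sle_ldivr a x y : a <> 0s -> (a ⊗ x ≼ y <-> x ≼ inv a ⊗ y).
Proof. by move=> a0; rewrite -(sle_pmul2l _ _ (inv_neq0 a0)) mulKf. Qed.

Lemma sle_ldivl a x y : a <> 0s -> (x ≼ a ⊗ y <-> inv a ⊗ x ≼ y).
Proof. by move=> a0; rewrite -(sle_pmul2l _ _ (inv_neq0 a0)) mulKf. Qed.

Lemma sle_mul_le1 a x : a <> 0s -> (a ⊗ x ≼ 1s <-> x ≼ inv a).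
Proof. by move=> a0; rewrite sle_ldivr // sf_mulx1. Qed.

Lemma sle_inv x y : x <> 0s -> y <> 0s -> (x ≼ y <-> inv y ≼ inv x).
Proof.
move=> x0 y0; rewrite -(sle_pmul2l _ _ (mulf_neq0 (inv_neq0 x0) (inv_neq0 y0))).
have -> : inv x ⊗ inv y ⊗ x = inv y ⊗ (inv x ⊗ x) by ring.
have -> : inv x ⊗ inv y ⊗ y = inv x ⊗ (inv y ⊗ y) by ring.
by rewrite !mulVf // !sf_mulx1.
Qed.

Lemma powr_neq0 x q : x <> 0s -> x ^^ q <> 0s.
Proof.
move=> x0 xq0; apply: (x0).
by rewrite -(sf_pow1 x0) -(Rplus_minus q 1) sf_powD // xq0 sf_mul0x.
Qed.

Lemma powr0 x : x <> 0s -> x ^^ 0 = 1s.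
Proof.
move=> x0; rewrite -(mulKf (x ^^ 0) x0) -{2}(sf_pow1 x0) -sf_powD //.
by rewrite Rplus_0_r sf_pow1 // mulVf.
Qed.

Lemma powrN x q : x <> 0s -> x ^^ (- q) = inv (x ^^ q).
Proof.
move=> x0; apply: mul_eq1_inv; last exact: powr_neq0.
by rewrite -sf_powD // Rplus_opp_r powr0.
Qed.

Lemma powr_inv x q : x <> 0s -> (inv x) ^^ q = x ^^ (- q).
Proof.
move=> x0; have -> : inv x = x ^^ (-1) by rewrite powrN // sf_pow1.
by rewrite sf_powM //; congr sf_pow; ring.
Qed.

Lemma powrK x q : x <> 0s -> q <> 0%R -> (x ^^ q) ^^ (1 / q) = x.
Proof. by move=> x0 q0; rewrite sf_powM // (_ : q * (1 / q) = 1)%R ?sf_pow1 //; field. Qed.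

Lemma sle_powr x y q : (0 < q)%R -> x ≼ y -> x ^^ q ≼ y ^^ q.
Proof.
move=> q0 xy; case: (classic (x = 0s)) => [-> | x0]; last exact: sf_pow_mono.
by rewrite sf_pow0 //; apply: sle0x.
Qed.

Lemma sle_powr2 x y q : (0 < q)%R -> x <> 0s -> y <> 0s -> (x ^^ q ≼ y ^^ q <-> x ≼ y).
Proof.
move=> q0 x0 y0; split=> [|]; last exact: sle_powr.
have q0' : q <> 0%R by lra.
rewrite -{2}(powrK x0 q0') -{2}(powrK y0 q0'); apply: sle_powr.
by apply: Rdiv_lt_0_compat; lra.
Qed.

Lemma sle_powr2N x y q : (q < 0)%R -> x <> 0s -> y <> 0s -> (x ^^ q ≼ y ^^ q <-> y ≼ x).
Proof.
move=> q0 x0 y0; rewrite -(sle_powr2 (q := - q) _ y0 x0); last lra.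
by rewrite (sle_inv (powr_neq0 (q := - q) y0) (powr_neq0 (q := - q) x0)) -!powrN // Ropp_involutive.
Qed.

Lemma sle_bsum k (F : 'I_k -> S) i : F i ≼ bsum F.
Proof. by rewrite /sle /bsum (bigD1 i) //= sf_addA sf_addxx. Qed.

Lemma bsum_sle k (F : 'I_k -> S) a : (forall i, F i ≼ a) -> bsum F ≼ a.
Proof.
move=> Fa; rewrite /bsum; apply: (big_ind (fun x => x ≼ a)) => //; first exact: sle0x.
by move=> x y; apply: sle_add.
Qed.

Lemma bsum_sleE k (F : 'I_k -> S) a : bsum F ≼ a <-> forall i, F i ≼ a.
Proof. by split=> [Fa i | /bsum_sle//]; apply: sle_trans Fa; apply: sle_bsum. Qed.

Lemma bsum_neq0 k (F : 'I_k -> S) i : F i <> 0s -> bsum F <> 0s.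
Proof. by move/sle_neq0; apply; apply: sle_bsum. Qed.

Lemma mulr_bsum k (F : 'I_k -> S) a : a ⊗ bsum F = bsum (fun i => a ⊗ F i).
Proof. by apply: (big_morph (sf_mul a)); [move=> x y; rewrite sf_mulDr | apply: sf_mulx0]. Qed.

Lemma mulr_bsum_sleE k (F : 'I_k -> S) a b : a ⊗ bsum F ≼ b <-> forall i, a ⊗ F i ≼ b.
Proof. by rewrite mulr_bsum bsum_sleE. Qed.

Lemma mull_bsum_sleE k (F : 'I_k -> S) a b : bsum F ⊗ a ≼ b <-> forall i, F i ⊗ a ≼ b.
Proof. by rewrite sf_mulC mulr_bsum_sleE; split=> Fab i; rewrite sf_mulC; apply: Fab. Qed.

Section KleeneStar.
Variables (n : nat) (B : 'I_n -> 'I_n -> S).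

Definition mulmxv (A : 'I_n -> 'I_n -> S) (v : 'I_n -> S) (i : 'I_n) : S :=
  bsum (fun k => A i k ⊗ v k).

Lemma kstar_diag i : 1s ≼ kstar B i i.
Proof.
have n0 : (0 < n)%N by apply: leq_ltn_trans (ltn_ord i).
apply: sle_trans (sle_bsum _ (Ordinal n0)).
by rewrite /mxpow /= /mxid eqxx; apply: sle_refl.
Qed.

Lemma sle_mulmxv_kstar v i : v i ≼ mulmxv (kstar B) v i.
Proof.
apply: sle_trans (sle_bsum _ i); rewrite -{1}(sf_mul1x (v i)).
exact/sle_mul2r/kstar_diag.
Qed.

Section SubEigenvector.
Variable y : 'I_n -> S.
Hypothesis By_le_y : forall i j, B i j ⊗ y j ≼ y i.

Lemma mxpow_mul_le L i k : mxpow B L i k ⊗ y k ≼ y i.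
Proof.
elim: L i => [|L IHL] i.
  rewrite /mxpow /= /mxid; case: eqP => [-> | _]; last by rewrite sf_mul0x; apply: sle0x.
  by rewrite sf_mul1x; apply: sle_refl.
apply/mull_bsum_sleE => j; rewrite -sf_mulA.
exact: sle_trans (sle_mul2l _ (IHL j)) (By_le_y i j).
Qed.

Lemma kstar_mul_le i k : kstar B i k ⊗ y k ≼ y i.
Proof. by apply/mull_bsum_sleE => L; apply: mxpow_mul_le. Qed.

Lemma mulmxv_kstar_id i : mulmxv (kstar B) y i = y i.
Proof.
apply: sle_anti; last exact: sle_mulmxv_kstar.
by apply/bsum_sleE => k; apply: kstar_mul_le.
Qed.

End SubEigenvector.

Fixpoint walk_weight (i : 'I_n) (s : seq 'I_n) : S :=
  if s is j :: s' then B i j ⊗ walk_weight j s' else 1s.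

Lemma walk_weight_cat i s1 s2 :
  walk_weight i (s1 ++ s2) = walk_weight i s1 ⊗ walk_weight (last i s1) s2.
Proof. by elim: s1 i => [|j s1 IHs] i /=; rewrite ?sf_mul1x // IHs sf_mulA. Qed.

Lemma walk_weight_le_mxpow i s : walk_weight i s ≼ mxpow B (size s) i (last i s).
Proof.
elim: s i => [|j s IHs] i; first by rewrite /mxpow /= /mxid eqxx; apply: sle_refl.
by apply: sle_trans (sle_bsum _ j); apply/sle_mul2l/IHs.
Qed.

(* The factor [a0] carries the weight of the walk prefix through the induction. *)
Lemma mxpow_le_walks L a0 i k a :
  (forall s, size s = L -> last i s = k -> a0 ⊗ walk_weight i s ≼ a) ->
  a0 ⊗ mxpow B L i k ≼ a.
Proof.
elim: L a0 i => [|L IHL] a0 i walks_le.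
  rewrite /mxpow /= /mxid; case: eqP => [ik | _]; last by rewrite sf_mulx0; apply: sle0x.
  exact: (walks_le [::]).
apply/mulr_bsum_sleE => j; rewrite sf_mulA; apply: IHL => s size_s last_s.
by rewrite -sf_mulA; apply: (walks_le (j :: s)); rewrite //= size_s.
Qed.

Lemma walk_has_cycle i s : (n <= size s)%N ->
  exists s1 s2 s3 : seq 'I_n,
    [/\ s = s1 ++ s2 ++ s3, (0 < size s2 <= n)%N & last (last i s1) s2 = last i s1].
Proof.
move=> n_le_s; set v := i :: s.
have size_v : size (take n.+1 v) = n.+1 by rewrite size_takel //= ltnS.
have /(uniqPn i) [a [b [ab b_lt eq_ab]]] : ~~ uniq (take n.+1 v).
  apply/negP => /card_uniqP; rewrite size_v => card_v.
  by have := max_card (mem (take n.+1 v)); rewrite card_v card_ord ltnn.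
rewrite size_v in b_lt; rewrite !nth_take // in eq_ab; last exact: ltn_trans ab b_lt.
have b_s : (b <= size s)%N by apply: leq_trans n_le_s; rewrite -ltnS.
have a_s : (a <= size s)%N by apply/(leq_trans _ b_s)/ltnW.
exists (take a s), (take (b - a) (drop a s)), (drop b s).
have take_b : take b s = take a s ++ take (b - a) (drop a s).
  by rewrite -takeD subnKC // ltnW.
split; first by rewrite catA -take_b cat_take_drop.
  rewrite size_takel ?size_drop ?leq_sub2r // subn_gt0 ab /=.
  by apply: leq_trans (leq_subr _ _) _; rewrite -ltnS.
by rewrite -last_cat -take_b !last_take.
Qed.

Hypothesis TrB_le1 : Tr B ≼ 1s.

Lemma closed_walk_weight_le1 u s :
  (0 < size s <= n)%N -> last u s = u -> walk_weight u s ≼ 1s.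
Proof.
case/andP=> s_gt0 s_le closed; apply: sle_trans (walk_weight_le_mxpow u s) _.
have k_lt : ((size s).-1 < n)%N by rewrite prednK.
apply: sle_trans TrB_le1; apply: sle_trans (sle_bsum _ (Ordinal k_lt)).
change (mxpow B (size s) u (last u s) ≼ mxtr (mxpow B (size s).-1.+1)).
by rewrite prednK // closed; apply: (sle_bsum (fun i => mxpow B (size s) i i)).
Qed.

Lemma walk_weight_le_kstar i s : walk_weight i s ≼ kstar B i (last i s).
Proof.
have [L] := ubnP (size s); elim: L s => // L IHL s s_ub.
case: (ltnP (size s) n) => [s_lt | s_ge].
  exact: sle_trans (walk_weight_le_mxpow i s) (sle_bsum _ (Ordinal s_lt)).
have [s1 [s2 [s3 [s_eq s2_size s2_closed]]]] := walk_has_cycle i s_ge; subst s.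
have last_drop : last i (s1 ++ s2 ++ s3) = last i (s1 ++ s3).
  by rewrite !last_cat s2_closed.
rewrite last_drop; apply: sle_trans (IHL _ _).
  rewrite !walk_weight_cat s2_closed; apply: sle_mul2l.
  by rewrite -[X in _ ≼ X]sf_mul1x; apply/sle_mul2r/closed_walk_weight_le1.
rewrite -ltnS; apply: leq_trans _ s_ub; rewrite ltnS !size_cat ltn_add2l.
by rewrite -{1}[size s3]add0n ltn_add2r; case/andP: s2_size.
Qed.

Lemma mxpow_le_kstar L i k : mxpow B L i k ≼ kstar B i k.
Proof.
rewrite -[mxpow _ _ _ _]sf_mul1x; apply: mxpow_le_walks => s _ <-.
by rewrite sf_mul1x; apply: walk_weight_le_kstar.
Qed.

Lemma mul_kstar_le i j k : B i j ⊗ kstar B j k ≼ kstar B i k.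
Proof.
apply/mulr_bsum_sleE => L; apply: sle_trans (mxpow_le_kstar L.+1 i k).
exact: (sle_bsum (fun l => B i l ⊗ mxpow B L l k)).
Qed.

Lemma mul_mulmxv_kstar_le v i j :
  B i j ⊗ mulmxv (kstar B) v j ≼ mulmxv (kstar B) v i.
Proof.
apply/mulr_bsum_sleE => k; rewrite sf_mulA; apply: sle_trans (sle_bsum _ k).
exact/sle_mul2r/mul_kstar_le.
Qed.

End KleeneStar.

Lemma sym_bound_powE z D c : z <> 0s -> D <> 0s -> c <> 0%R ->
  (z ≼ D /\ inv z ≼ D) <-> (z ^^ c ≼ D ^^ Rabs c /\ z ^^ (- c) ≼ D ^^ Rabs c).
Proof.
move=> z0 D0 c0; have iz0 := inv_neq0 z0.
case: (Rlt_or_le 0 c) => [c_gt0 | c_le0].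
  rewrite Rabs_pos_eq; last lra.
  by rewrite -(sle_powr2 c_gt0 z0 D0) -(sle_powr2 c_gt0 iz0 D0) powr_inv.
rewrite Rabs_left; last lra.
have c_gt0 : (0 < - c)%R by lra.
rewrite -(sle_powr2 c_gt0 z0 D0) -(sle_powr2 c_gt0 iz0 D0) powr_inv // Ropp_involutive.
tauto.
Qed.

Lemma ratio_bound_powE a x D c : a <> 0s -> x <> 0s -> D <> 0s -> c <> 0%R ->
  (inv a ⊗ x ≼ D /\ inv x ⊗ a ≼ D) <->
  (D ^^ (- Rabs c) ⊗ a ^^ c ≼ x ^^ c /\ D ^^ (- Rabs c) ⊗ a ^^ (- c) ⊗ x ^^ c ≼ 1s).
Proof.
move=> a0 x0 D0 c0.
have ax0 : inv a ⊗ x <> 0s by apply: mulf_neq0 (inv_neq0 a0) x0.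
have -> : inv x ⊗ a = inv (inv a ⊗ x) by rewrite (invM (inv_neq0 a0) x0) (invK a0) sf_mulC.
rewrite (sym_bound_powE ax0 D0 c0) !(sf_powMl _ (inv_neq0 a0) x0) !(powr_inv _ a0) Ropp_involutive.
rewrite (powrN (Rabs c) D0) (powrN c x0).
have Dc0 : D ^^ Rabs c <> 0s by apply: powr_neq0.
have xc0 : x ^^ c <> 0s by apply: powr_neq0.
have lower : a ^^ c ⊗ inv (x ^^ c) ≼ D ^^ Rabs c <-> inv (D ^^ Rabs c) ⊗ a ^^ c ≼ x ^^ c.
  by rewrite sf_mulC (sle_ldivr _ _ (inv_neq0 xc0)) invK // (sf_mulC (x ^^ c)) sle_ldivl.
have upper : a ^^ (- c) ⊗ x ^^ c ≼ D ^^ Rabs c <->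
             inv (D ^^ Rabs c) ⊗ a ^^ (- c) ⊗ x ^^ c ≼ 1s.
  by rewrite -sf_mulA (sle_mul_le1 _ (inv_neq0 Dc0)) (invK Dc0).
rewrite lower upper; tauto.
Qed.

Lemma interval_powE a b x c : a <> 0s -> b <> 0s -> x <> 0s -> a ≼ b -> c <> 0%R ->
  (a ≼ x /\ x ≼ b) <->
  (inv (a ^^ (- c) ⊕ b ^^ (- c)) ≼ x ^^ c /\ inv (a ^^ c ⊕ b ^^ c) ⊗ x ^^ c ≼ 1s).
Proof.
move=> a0 b0 x0 ab c0.
have hi0 : a ^^ c ⊕ b ^^ c <> 0s by apply/addf_neq0l/powr_neq0.
rewrite (sle_mul_le1 _ (inv_neq0 hi0)) (invK hi0).
case: (Rlt_or_le 0 c) => [c_gt0 | c_le0].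
  have -> : a ^^ (- c) ⊕ b ^^ (- c) = a ^^ (- c).
    by rewrite sf_addC; apply/sle_powr2N => //; lra.
  have -> : a ^^ c ⊕ b ^^ c = b ^^ c by apply: sle_powr.
  by rewrite (powrN c a0) (invK (powr_neq0 (q := c) a0)) !sle_powr2.
have c_lt0 : (c < 0)%R by lra.
have -> : a ^^ (- c) ⊕ b ^^ (- c) = b ^^ (- c) by apply: sle_powr => //; lra.
have -> : a ^^ c ⊕ b ^^ c = a ^^ c by rewrite sf_addC; apply/sle_powr2N.
by rewrite (powrN c b0) (invK (powr_neq0 (q := c) b0)) !sle_powr2N //; tauto.
Qed.

Lemma mul_powN_le1E tau U X (r : R) : tau <> 0s -> U <> 0s -> (0 < r)%R ->
  (tau ^^ (- r) ⊗ U ⊗ X ≼ 1s <-> U ^^ (1 / r) ⊗ X ^^ (1 / r) ≼ tau).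
Proof.
move=> tau0 U0 r_gt0; have r'_gt0 : (0 < 1 / r)%R by apply: Rdiv_lt_0_compat; lra.
case: (classic (X = 0s)) => [-> | X0].
  by rewrite sf_mulx0 sf_pow0 // sf_mulx0; split=> _; apply: sle0x.
have taur0 : tau ^^ r <> 0s by apply: powr_neq0.
rewrite -sf_mulA (powrN r tau0) (sle_mul_le1 _ (inv_neq0 taur0)) (invK taur0).
rewrite -(sf_powMl _ U0 X0) -(sle_powr2 r'_gt0 (mulf_neq0 U0 X0) taur0).
by rewrite powrK //; lra.
Qed.

Lemma two_level_factors_le1E tau hj hl Pj Pl K ci ck wj wl :
  tau <> 0s -> hj <> 0s -> hl <> 0s ->
  (0 < ci)%R -> (0 < ck)%R -> (0 < wj)%R -> (0 < wl)%R ->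
  let D := (ci * wl + ck * wj)%R in
  ((tau ^^ (- ci / wj) ⊗ hj ^^ (ci / wj) ⊗ Pj) ⊗ K ⊗
     (tau ^^ (- ck / wl) ⊗ hl ^^ (ck / wl) ⊗ Pl) ≼ 1s <->
   hj ^^ (ci * wl / D) ⊗ hl ^^ (ck * wj / D) ⊗ (Pj ⊗ K ⊗ Pl) ^^ (wj * wl / D) ≼ tau).
Proof.
move=> tau0 hj0 hl0 ci_gt0 ck_gt0 wj_gt0 wl_gt0 D.
have D_gt0 : (0 < D)%R by rewrite /D; nra.
set r := (ci / wj + ck / wl)%R.
have r_gt0 : (0 < r)%R.
  have := Rdiv_lt_0_compat _ _ ci_gt0 wj_gt0.
  by have := Rdiv_lt_0_compat _ _ ck_gt0 wl_gt0; rewrite /r; lra.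
have -> : (tau ^^ (- ci / wj) ⊗ hj ^^ (ci / wj) ⊗ Pj) ⊗ K ⊗
          (tau ^^ (- ck / wl) ⊗ hl ^^ (ck / wl) ⊗ Pl) =
          tau ^^ (- r) ⊗ (hj ^^ (ci / wj) ⊗ hl ^^ (ck / wl)) ⊗ (Pj ⊗ K ⊗ Pl).
  rewrite (_ : - r = - ci / wj + - ck / wl)%R; last by rewrite /r; field; lra.
  by rewrite sf_powD //; ring.
have hj' : hj ^^ (ci / wj) <> 0s by apply: powr_neq0.
have hl' : hl ^^ (ck / wl) <> 0s by apply: powr_neq0.
rewrite mul_powN_le1E //; last exact: mulf_neq0.
rewrite (sf_powMl _ hj' hl') !sf_powM //.
have -> : (1 / r = wj * wl / D)%R by rewrite /r /D; field; move: D_gt0; rewrite /D; lra.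
have -> : (ci / wj * (wj * wl / D) = ci * wl / D)%R by field; lra.
by have -> : (ck / wl * (wj * wl / D) = ck * wj / D)%R by field; lra.
Qed.

Lemma left_level_factor_le1E tau hj Pj K Y ci wj :
  tau <> 0s -> hj <> 0s -> (0 < ci)%R -> (0 < wj)%R ->
  ((tau ^^ (- ci / wj) ⊗ hj ^^ (ci / wj) ⊗ Pj) ⊗ K ⊗ Y ≼ 1s <->
   hj ⊗ (Pj ⊗ K ⊗ Y) ^^ (wj / ci) ≼ tau).
Proof.
move=> tau0 hj0 ci_gt0 wj_gt0; have r_gt0 : (0 < ci / wj)%R by apply: Rdiv_lt_0_compat.
have -> : (tau ^^ (- ci / wj) ⊗ hj ^^ (ci / wj) ⊗ Pj) ⊗ K ⊗ Y =
          tau ^^ (- (ci / wj)) ⊗ hj ^^ (ci / wj) ⊗ (Pj ⊗ K ⊗ Y).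
  by rewrite (_ : - ci / wj = - (ci / wj))%R; [ring | field; lra].
rewrite mul_powN_le1E //; last exact: powr_neq0.
rewrite powrK //; last lra.
by rewrite (_ : 1 / (ci / wj) = wj / ci)%R //; field; lra.
Qed.

Lemma right_level_factor_le1E tau hl Pl K Y ck wl :
  tau <> 0s -> hl <> 0s -> (0 < ck)%R -> (0 < wl)%R ->
  (Y ⊗ K ⊗ (tau ^^ (- ck / wl) ⊗ hl ^^ (ck / wl) ⊗ Pl) ≼ 1s <->
   hl ⊗ (Y ⊗ K ⊗ Pl) ^^ (wl / ck) ≼ tau).
Proof.
move=> tau0 hl0 ck_gt0 wl_gt0.
have -> : Y ⊗ K ⊗ (tau ^^ (- ck / wl) ⊗ hl ^^ (ck / wl) ⊗ Pl) =
          (tau ^^ (- ck / wl) ⊗ hl ^^ (ck / wl) ⊗ Pl) ⊗ (Y ⊗ K) ⊗ 1s by ring.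
by rewrite left_level_factor_le1E // (_ : Pl ⊗ (Y ⊗ K) ⊗ 1s = Y ⊗ K ⊗ Pl) //; ring.
Qed.

Lemma bsum_mul2_sleE k (F : 'I_k -> S) a b z :
  bsum F ⊗ a ⊗ b ≼ z <-> forall i, F i ⊗ a ⊗ b ≼ z.
Proof.
rewrite -sf_mulA mull_bsum_sleE.
by split=> Fz i; move: (Fz i); rewrite sf_mulA.
Qed.

Lemma bsum_mul_bsum_sleE k l (F : 'I_k -> S) (G : 'I_l -> S) a z :
  bsum F ⊗ a ⊗ bsum G ≼ z <-> forall i j, F i ⊗ a ⊗ G j ≼ z.
Proof.
rewrite mulr_bsum_sleE.
split=> [FGz i j | FGz j]; last by apply/bsum_mul2_sleE => i; apply: FGz.
by move/bsum_mul2_sleE: (FGz j); apply.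
Qed.

Section Problem.
Variables (n m : nat) (p : 'I_n -> 'I_m -> S) (w : 'I_m -> R) (h d : 'I_m -> S)
  (c : 'I_n -> R) (B : 'I_n -> 'I_n -> S) (f g : 'I_n -> S).
Local Unset Implicit Arguments.
Hypotheses (n_gt0 : (1 <= n)%N) (m_gt0 : (1 <= m)%N)
  (p_neq0 : forall i j, p i j <> 0s) (w_gt0 : forall j, (0 < w j)%R)
  (h_neq0 : forall j, h j <> 0s) (d_neq0 : forall j, d j <> 0s)
  (c_neq0 : forall i, c i <> 0%R) (f_reg : regular f) (g_reg : regular g)
  (f_le_g : forall i, f i ≼ g i).
Local Set Implicit Arguments.
Implicit Types (tau : S).

Local Notation dist := (Defs.dist p).
Local Notation objective := (objective p w h).
Local Notation feasible := (feasible p d c B f g).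
Local Notation svec := (svec p d c f g).
Local Notation tinv := (tinv p d c f g).
Local Notation theta := (theta p w h d c B f g).

Let i0 : 'I_n := Ordinal n_gt0.
Let j0 : 'I_m := Ordinal m_gt0.

Lemma svec_neq0 i : svec i <> 0s.
Proof. by apply/addf_neq0l/(bsum_neq0 (i := j0))/mulf_neq0; apply: powr_neq0. Qed.

Lemma tinv_neq0 i : tinv i <> 0s.
Proof. by apply/addf_neq0l/(bsum_neq0 (i := j0))/mulf_neq0; apply: powr_neq0. Qed.

Lemma dist_neq0 (x : 'I_n -> S) j : regular x -> dist x j <> 0s.
Proof. by move=> x_reg; apply/addf_neq0l/(bsum_neq0 (i := i0))/mulf_neq0/x_reg/inv_neq0. Qed.

Lemma objective_neq0 (x : 'I_n -> S) : regular x -> objective x <> 0s.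
Proof. by move=> x_reg; apply/(bsum_neq0 (i := j0))/mulf_neq0/powr_neq0/dist_neq0. Qed.

Lemma dist_leE (x : 'I_n -> S) D j : regular x -> D <> 0s ->
  (dist x j ≼ D <-> forall i, D ^^ (- Rabs (c i)) ⊗ p i j ^^ c i ≼ x i ^^ c i /\
                             D ^^ (- Rabs (c i)) ⊗ p i j ^^ (- c i) ⊗ x i ^^ c i ≼ 1s).
Proof.
move=> x_reg D0; rewrite /Defs.dist sle_addE !bsum_sleE.
have ratioE i := ratio_bound_powE (p_neq0 i j) (x_reg i) D0 (c_neq0 i).
split=> [[lo hi] i | bounds]; first exact/ratioE.
by split=> i; case: (proj2 (ratioE i) (bounds i)).
Qed.

Lemma svec_leE i y : svec i ≼ y <->
  (forall j, d j ^^ (- Rabs (c i)) ⊗ p i j ^^ c i ≼ y) /\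
  inv (f i ^^ (- c i) ⊕ g i ^^ (- c i)) ≼ y.
Proof. by rewrite /Defs.svec sle_addE bsum_sleE. Qed.

Lemma tinv_mul_le1E i y : tinv i ⊗ y ≼ 1s <->
  (forall j, d j ^^ (- Rabs (c i)) ⊗ p i j ^^ (- c i) ⊗ y ≼ 1s) /\
  inv (f i ^^ c i ⊕ g i ^^ c i) ⊗ y ≼ 1s.
Proof. by rewrite /Defs.tinv sf_mulDl sle_addE mull_bsum_sleE. Qed.

Lemma feasibleE (x : 'I_n -> S) : regular x ->
  feasible x <-> (forall i k, B i k ⊗ x k ^^ c k ≼ x i ^^ c i) /\
                 (forall i, svec i ≼ x i ^^ c i /\ tinv i ⊗ x i ^^ c i ≼ 1s).
Proof.
move=> x_reg; rewrite /Defs.feasible.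
have distE j := dist_leE j x_reg (d_neq0 j).
have boxE i := interval_powE (f_reg i) (g_reg i) (x_reg i) (f_le_g i) (c_neq0 i).
split=> [[_ [dist_le [cone box]]] | [cone bounds]].
  split=> // i; rewrite svec_leE tinv_mul_le1E.
  have [box_lo box_hi] := proj1 (boxE i) (box i).
  by split; split=> // j; have [] := proj1 (distE j) (dist_le j) i.
split=> //; split; last split=> //.
  by move=> j; apply/distE => i; have [/svec_leE [lo _] /tinv_mul_le1E [hi _]] := bounds i.
by move=> i; apply/boxE; have [/svec_leE [_ lo] /tinv_mul_le1E [_ hi]] := bounds i.
Qed.

(* The vectors q and r^- of the statement, with theta replaced by an arbitrary level tau. *)
Definition qvec_at tau i : S :=
  bsum (fun j => tau ^^ (- Rabs (c i) / w j) ⊗ h j ^^ (Rabs (c i) / w j) ⊗ p i j ^^ c i).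
Definition rinv_at tau i : S :=
  bsum (fun j => tau ^^ (- Rabs (c i) / w j) ⊗ h j ^^ (Rabs (c i) / w j) ⊗ p i j ^^ (- c i)).

Definition radius tau j : S := (inv (h j) ⊗ tau) ^^ (1 / w j).

Lemma radius_neq0 tau j : tau <> 0s -> radius tau j <> 0s.
Proof. by move=> tau0; apply/powr_neq0/mulf_neq0/tau0/inv_neq0. Qed.

Lemma radius_powN tau i j : tau <> 0s ->
  radius tau j ^^ (- Rabs (c i)) = tau ^^ (- Rabs (c i) / w j) ⊗ h j ^^ (Rabs (c i) / w j).
Proof.
move=> tau0; have hj0 := inv_neq0 (h_neq0 j); have wj0 := w_gt0 j.
rewrite (sf_powM _ _ (mulf_neq0 hj0 tau0)) (sf_powMl _ hj0 tau0).
rewrite (powr_inv _ (h_neq0 j)) sf_mulC.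
by congr (_ ⊗ _); congr sf_pow; field; lra.
Qed.

Lemma objective_term_leE (x : 'I_n -> S) tau j : regular x -> tau <> 0s ->
  h j ⊗ dist x j ^^ w j ≼ tau <-> dist x j ≼ radius tau j.
Proof.
move=> x_reg tau0; have wj0 := w_gt0 j; have hj0 := inv_neq0 (h_neq0 j).
have dist0 := dist_neq0 (j := j) x_reg; have radius0 := radius_neq0 (j := j) tau0.
rewrite (sle_ldivr _ _ (h_neq0 j)) -(sle_powr2 wj0 dist0 radius0).
rewrite (sf_powM _ _ (mulf_neq0 hj0 tau0)) (_ : 1 / w j * w j = 1)%R; last by field; lra.
by rewrite (sf_pow1 (mulf_neq0 hj0 tau0)).
Qed.

Lemma objective_leE (x : 'I_n -> S) tau : regular x -> tau <> 0s ->
  (objective x ≼ tau <->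
   forall i, qvec_at tau i ≼ x i ^^ c i /\ rinv_at tau i ⊗ x i ^^ c i ≼ 1s).
Proof.
move=> x_reg tau0; rewrite /Defs.objective bsum_sleE.
have termE j : h j ⊗ dist x j ^^ w j ≼ tau <-> forall i,
    tau ^^ (- Rabs (c i) / w j) ⊗ h j ^^ (Rabs (c i) / w j) ⊗ p i j ^^ c i ≼ x i ^^ c i /\
    tau ^^ (- Rabs (c i) / w j) ⊗ h j ^^ (Rabs (c i) / w j) ⊗ p i j ^^ (- c i)
      ⊗ x i ^^ c i ≼ 1s.
  rewrite (objective_term_leE j x_reg tau0) (dist_leE j x_reg (radius_neq0 (j := j) tau0)).
  by split=> bounds i; move: (bounds i); rewrite radius_powN.
rewrite /qvec_at /rinv_at; split=> [obj_le i | bounds j].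
  by rewrite bsum_sleE mull_bsum_sleE; split=> j; case: (proj1 (termE j) (obj_le j) i).
apply/termE => i; have [] := bounds i; rewrite bsum_sleE mull_bsum_sleE.
by move=> lo hi; split; [apply: lo | apply: hi].
Qed.

Definition admissible tau (y : 'I_n -> S) : Prop :=
  (forall i k, B i k ⊗ y k ≼ y i) /\
  (forall i, qvec_at tau i ⊕ svec i ≼ y i /\ (rinv_at tau i ⊕ tinv i) ⊗ y i ≼ 1s).

Lemma feasible_objective_leE (x : 'I_n -> S) tau : regular x -> tau <> 0s ->
  feasible x /\ objective x ≼ tau <-> admissible tau (fun i => x i ^^ c i).
Proof.
move=> x_reg tau0; rewrite feasibleE // objective_leE // /admissible.
have boundsE i : qvec_at tau i ⊕ svec i ≼ x i ^^ c i /\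
                 (rinv_at tau i ⊕ tinv i) ⊗ x i ^^ c i ≼ 1s <->
   (svec i ≼ x i ^^ c i /\ tinv i ⊗ x i ^^ c i ≼ 1s) /\
   (qvec_at tau i ≼ x i ^^ c i /\ rinv_at tau i ⊗ x i ^^ c i ≼ 1s).
  by rewrite sf_mulDl !sle_addE; tauto.
split=> [[[cone feas] obj] | [cone bounds]].
  by split=> // i; apply/boundsE.
by split; first split=> //; move=> i; have [] := proj1 (boundsE i) (bounds i).
Qed.

Definition level_form tau i k : S :=
  (rinv_at tau i ⊕ tinv i) ⊗ kstar B i k ⊗ (qvec_at tau k ⊕ svec k).

Lemma admissible_level_form_le1 tau (y : 'I_n -> S) i k :
  admissible tau y -> level_form tau i k ≼ 1s.
Proof.
case=> cone bounds; apply: sle_trans (bounds i).2.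
rewrite /level_form -sf_mulA; apply: sle_mul2l.
exact: sle_trans (sle_mul2l _ (bounds k).1) (kstar_mul_le cone i k).
Qed.

(* The three terms of theta come from r^- B^* q, r^- B^* s and t^- B^* q. *)
Definition theta_rq i k j l : S :=
  let D := (Rabs (c i) * w l + Rabs (c k) * w j)%R in
  h j ^^ (Rabs (c i) * w l / D) ⊗ h l ^^ (Rabs (c k) * w j / D) ⊗
  (p i j ^^ (- c i) ⊗ kstar B i k ⊗ p k l ^^ c k) ^^ (w j * w l / D).
Definition theta_rs i k j : S :=
  h j ⊗ (p i j ^^ (- c i) ⊗ kstar B i k ⊗ svec k) ^^ (w j / Rabs (c i)).
Definition theta_tq i k l : S :=
  h l ⊗ (tinv i ⊗ kstar B i k ⊗ p k l ^^ c k) ^^ (w l / Rabs (c k)).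

Lemma thetaE : theta = bsum (fun i => bsum (fun k => bsum (fun j => bsum (fun l =>
  theta_rq i k j l ⊕ (theta_rs i k j ⊕ theta_tq i k l))))).
Proof. by []. Qed.

Lemma rinv_kstar_qvec_le1E tau i k : tau <> 0s ->
  rinv_at tau i ⊗ kstar B i k ⊗ qvec_at tau k ≼ 1s <-> forall j l, theta_rq i k j l ≼ tau.
Proof.
move=> tau0; rewrite bsum_mul_bsum_sleE.
by split=> le1 j l; apply/two_level_factors_le1E => //;
  by [apply: le1 | apply: Rabs_pos_lt; apply: c_neq0].
Qed.

Lemma rinv_kstar_svec_le1E tau i k : tau <> 0s ->
  rinv_at tau i ⊗ kstar B i k ⊗ svec k ≼ 1s <-> forall j, theta_rs i k j ≼ tau.
Proof.
move=> tau0; rewrite bsum_mul2_sleE.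
by split=> le1 j; apply/left_level_factor_le1E => //;
  by [apply: le1 | apply: Rabs_pos_lt; apply: c_neq0].
Qed.

Lemma tinv_kstar_qvec_le1E tau i k : tau <> 0s ->
  tinv i ⊗ kstar B i k ⊗ qvec_at tau k ≼ 1s <-> forall l, theta_tq i k l ≼ tau.
Proof.
move=> tau0; rewrite mulr_bsum_sleE.
by split=> le1 l; apply/right_level_factor_le1E => //;
  by [apply: le1 | apply: Rabs_pos_lt; apply: c_neq0].
Qed.

Hypothesis tinv_kstar_svec_le1 :
  bsum (fun i => bsum (fun k => tinv i ⊗ kstar B i k ⊗ svec k)) ≼ 1s.

Lemma level_form_le1E tau i k : tau <> 0s ->
  level_form tau i k ≼ 1s <->
  forall j l, theta_rq i k j l ⊕ (theta_rs i k j ⊕ theta_tq i k l) ≼ tau.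
Proof.
move=> tau0.
have -> : level_form tau i k =
    rinv_at tau i ⊗ kstar B i k ⊗ qvec_at tau k ⊕ rinv_at tau i ⊗ kstar B i k ⊗ svec k ⊕
    tinv i ⊗ kstar B i k ⊗ qvec_at tau k ⊕ tinv i ⊗ kstar B i k ⊗ svec k.
  by rewrite /level_form; ring.
have ts_le1 : tinv i ⊗ kstar B i k ⊗ svec k ≼ 1s.
  by move/bsum_sleE: tinv_kstar_svec_le1 => /(_ i) /bsum_sleE /(_ k).
rewrite !sle_addE rinv_kstar_qvec_le1E // rinv_kstar_svec_le1E // tinv_kstar_qvec_le1E //.
split=> [[[[rq rs] tq] _] j l | le_tau]; first by rewrite !sle_addE.
have {}le_tau j l := proj1 (sle_addE _ _ _) (le_tau j l).
split=> //; split; first split.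
- by move=> j l; case: (le_tau j l).
- by move=> j; case: (le_tau j j0) => _ /sle_addE [].
- by move=> l; case: (le_tau j0 l) => _ /sle_addE [].
Qed.

Lemma theta_leE tau : tau <> 0s -> theta ≼ tau <-> forall i k, level_form tau i k ≼ 1s.
Proof.
move=> tau0; rewrite thetaE bsum_sleE; split=> [le_tau i k | le1 i].
  apply/level_form_le1E => // j l.
  by move/bsum_sleE: (le_tau i) => /(_ k) /bsum_sleE /(_ j) /bsum_sleE; apply.
apply/bsum_sleE => k; apply/bsum_sleE => j; apply/bsum_sleE => l.
exact: (proj1 (level_form_le1E _ _ tau0) (le1 i k)).
Qed.

Lemma theta_neq0 : theta <> 0s.
Proof.
rewrite thetaE; do 2!apply: (bsum_neq0 (i := i0)); do 2!apply: (bsum_neq0 (i := j0)).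
apply/addf_neq0r/addf_neq0l/mulf_neq0/powr_neq0 => //.
exact/mulf_neq0/svec_neq0/mulf_neq0/(sle_neq0 one_neq0 (kstar_diag B i0))/powr_neq0.
Qed.

Lemma theta_le_objective (x : 'I_n -> S) : feasible x -> theta ≼ objective x.
Proof.
move=> feas_x; have x_reg := proj1 feas_x; have obj0 := objective_neq0 x_reg.
apply/(theta_leE obj0) => i k; apply: (admissible_level_form_le1 (y := fun i => x i ^^ c i)).
by apply/feasible_objective_leE => //; split=> //; apply: sle_refl.
Qed.

Hypothesis TrB_le1 : Tr B ≼ 1s.

Definition upper_row tau k : S := bsum (fun i => (rinv_at tau i ⊕ tinv i) ⊗ kstar B i k).

Lemma upper_row_neq0 tau k : upper_row tau k <> 0s.
Proof.
apply/(bsum_neq0 (i := k))/mulf_neq0/(sle_neq0 one_neq0 (kstar_diag B k)).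
exact/addf_neq0r/tinv_neq0.
Qed.

Lemma admissibleE tau (y : 'I_n -> S) : admissible tau y <->
  exists v, [/\ forall i, qvec_at tau i ⊕ svec i ≼ v i,
                forall k, upper_row tau k ⊗ v k ≼ 1s
              & forall i, y i = mulmxv (kstar B) v i].
Proof.
split=> [[cone bounds] | [v [v_ge v_le y_eq]]].
  exists y; split=> [i | k | i]; first exact: (bounds i).1.
  - apply/mull_bsum_sleE => i; apply: sle_trans (bounds i).2.
    by rewrite -sf_mulA; apply/sle_mul2l/kstar_mul_le.
  - by rewrite mulmxv_kstar_id.
split=> [i j | i]; rewrite !y_eq; first exact: mul_mulmxv_kstar_le.
split; first exact: sle_trans (v_ge i) (sle_mulmxv_kstar _ _ i).
apply/mulr_bsum_sleE => k; apply: sle_trans (v_le k).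
rewrite sf_mulA; apply/sle_mul2r.
exact: (sle_bsum (fun i => (rinv_at tau i ⊕ tinv i) ⊗ kstar B i k)).
Qed.

Local Notation qvec := (qvec p w h d c B f g).
Local Notation uvec := (uvec p w h d c B f g).

Lemma upper_row_mul_le1E v k : upper_row theta k ⊗ v ≼ 1s <-> v ≼ uvec k.
Proof. by apply: sle_mul_le1; apply: upper_row_neq0. Qed.

Lemma optimalE (x : 'I_n -> S) : feasible x /\ objective x = theta <->
  regular x /\ admissible theta (fun i => x i ^^ c i).
Proof.
split=> [[feas_x obj_x] | [x_reg adm]].
  have x_reg := proj1 feas_x; split=> //.
  by apply/(feasible_objective_leE x_reg theta_neq0); rewrite obj_x; split=> //; apply: sle_refl.
have [feas_x obj_le] := proj2 (feasible_objective_leE x_reg theta_neq0) adm.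
by split=> //; apply: sle_anti obj_le (theta_le_objective feas_x).
Qed.

Lemma optimal_paramE (x : 'I_n -> S) :
  feasible x /\ objective x = theta <->
  exists v, (forall i, qvec i ⊕ svec i ≼ v i) /\ (forall i, v i ≼ uvec i) /\
            (forall i, x i = mulmxv (kstar B) v i ^^ (1 / c i)).
Proof.
rewrite optimalE; split=> [[x_reg /admissibleE [v [v_ge v_le y_eq]]] | [v [v_ge [v_le x_eq]]]].
  exists v; split=> //; split=> i; first exact/upper_row_mul_le1E.
  by rewrite -y_eq (powrK (x_reg i) (c_neq0 i)).
have y_neq0 i : mulmxv (kstar B) v i <> 0s.
  apply: sle_neq0 (sle_mulmxv_kstar _ v i); apply: sle_neq0 (v_ge i).
  exact/addf_neq0r/svec_neq0.
have xc i : x i ^^ c i = mulmxv (kstar B) v i.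
  rewrite x_eq (sf_powM _ _ (y_neq0 i)) (_ : 1 / c i * c i = 1)%R ?sf_pow1 //.
  by field; apply: c_neq0.
split=> [i | ]; first by rewrite x_eq; apply: powr_neq0.
apply/admissibleE; exists v; split=> [// | k | i]; last exact: xc.
exact/upper_row_mul_le1E/v_le.
Qed.

Lemma exists_optimal : exists x : 'I_n -> S, feasible x /\ objective x = theta.
Proof.
pose v i := qvec i ⊕ svec i.
exists (fun i => mulmxv (kstar B) v i ^^ (1 / c i)); apply/optimal_paramE.
exists v; split=> [i | ]; first exact: sle_refl.
split=> // k; apply/upper_row_mul_le1E/mull_bsum_sleE => i.
exact: (proj1 (theta_leE theta_neq0) (sle_refl _) i k).
Qed.

End Problem.

End IdempotentSemifield.

Theorem theorem3 (S : idem_semifield) (n m : nat)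
  (p : 'I_n -> 'I_m -> S) (w : 'I_m -> R) (h d : 'I_m -> S)
  (c : 'I_n -> R) (B : 'I_n -> 'I_n -> S) (f g : 'I_n -> S) :
  (1 <= n)%N -> (1 <= m)%N ->
  (forall i j, p i j <> sf_zero S) ->
  (forall j, (0 < w j)%R) ->
  (forall j, h j <> sf_zero S) ->
  (forall j, d j <> sf_zero S) ->
  (forall i, c i <> 0%R) ->
  regular f -> regular g ->
  (forall i, sle (f i) (g i)) ->
  sle (Tr B) (sf_one S) ->
  sle (bsum (fun i => bsum (fun k =>
         sf_mul (sf_mul (tinv p d c f g i) (kstar B i k)) (svec p d c f g k))))
      (sf_one S) ->
  let th := theta p w h d c B f g in
  (exists x, feasible p d c B f g x /\ objective p w h x = th) /\
  (forall x, feasible p d c B f g x -> sle th (objective p w h x)) /\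
  (forall x : 'I_n -> S,
     (feasible p d c B f g x /\ objective p w h x = th) <->
     (exists v : 'I_n -> S,
        (forall i, sle (sf_add (qvec p w h d c B f g i) (svec p d c f g i)) (v i)) /\
        (forall i, sle (v i) (uvec p w h d c B f g i)) /\
        (forall i, x i = sf_pow (bsum (fun k => sf_mul (kstar B i k) (v k)))
                                (1 / c i)%R))).
Proof.
move=> n_gt0 m_gt0 p_neq0 w_gt0 h_neq0 d_neq0 c_neq0 f_reg g_reg f_le_g TrB_le1 tBs_le1 th.
split; first exact: exists_optimal.
split; first by move=> x; apply: theta_le_objective.
by move=> x; apply: optimal_paramE.
Qed.
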